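(* Let $|\psi\rangle=\sum_jc_j|\phi_j\rangle$ be a normalized $n$-qubit state where the $|\phi_j\rangle$ are stabilizer states, and let $k\ge1$ be an integer. Then one can sample from an ensemble $\rho_1$ such that every sampled pure state has stabilizer rank at most $k$ and $$\|\rho_1-|\psi\rangle\langle\psi|\|_1\le\frac{2\|c\|_1^2}{k}+\sqrt{\mathrm{Var}[\langle\Omega|\Omega\rangle]},$$ where $|\Omega\rangle$ is the random sparsified vector defined below.
   Context: Sparsification: let $|\omega_1\rangle,\dots,|\omega_k\rangle$ be i.i.d. random vectors with $|\omega_\alpha\rangle=(c_j/|c_j|)|\phi_j\rangle$ with probability $|c_j|/\|c\|_1$, and $|\Omega\rangle=\frac{\|c\|_1}{k}\sum_{\alpha=1}^k|\omega_\alpha\rangle$. The ensemble is $\rho_1=\mathbb E\big[|\Omega\rangle\langle\Omega|/\langle\Omega|\Omega\rangle\big]$, sampled by drawing $|\Omega\rangle$ and normalizing. The stabilizer rank of a vector is the minimal number of stabilizer states in a linear decomposition of it. *)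

From HB Require Import structures.
From mathcomp Require Import all_boot all_order all_algebra.

Set Implicit Arguments. Unset Strict Implicit. Unset Printing Implicit Defensive.
Import Order.TTheory GRing.Theory Num.Theory Num.Def.
Local Open Scope ring_scope.

Section Quantum.
Variable C : numClosedFieldType.

(* ---------- n-qubit Hilbert space ----------
   Dimension #|{ffun 'I_n -> bool}| (= 2^n); the computational basis index
   x : 'I_(qdim n) corresponds to the bit string  bits x. *)
Definition qdim (n : nat) : nat := #|{ffun 'I_n -> bool}|.
Definition bits {n : nat} (x : 'I_(qdim n)) : {ffun 'I_n -> bool} := enum_val x.

Definition ket (n : nat) := 'cV[C]_(qdim n).

Definition braket {n : nat} (u v : ket n) : C := ((map_mx conjC u)^T *m v) 0 0.
Definition outer {n : nat} (u v : ket n) : 'M[C]_(qdim n) := u *m (map_mx conjC v)^T.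

(* ---------- Pauli operators ----------
   single-qubit Paulis indexed by 'I_4 : 0 = I, 1 = X, 2 = Y, 3 = Z,
   given as matrix entries  <a| sigma |b>. *)
Definition pauli1 (t : 'I_4) (a b : bool) : C :=
  match val t with
  | 0%N => (a == b)%:R
  | 1%N => (a != b)%:R
  | 2%N => (a != b)%:R * (if a then 'i else - 'i)
  | _ => (a == b)%:R * (if a then -1 else 1)
  end.

Definition pauli_string {n : nat} (p : {ffun 'I_n -> 'I_4}) : 'M[C]_(qdim n) :=
  \matrix_(x, y) \prod_(i < n) pauli1 (p i) (bits x i) (bits y i).

Definition pauli_op {n : nat} (sp : bool * {ffun 'I_n -> 'I_4}) : 'M[C]_(qdim n) :=
  (if sp.1 then -1 else 1) *: pauli_string sp.2.

(* ---------- stabilizer states ----------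
   A (normalized) state is a stabilizer state iff its stabilizer group
   {P in Pauli group | P psi = psi} has 2^n elements (elements of the Pauli
   group with phase +-i can never stabilize a nonzero vector, so only the
   Hermitian elements (+-1) * Pauli string need to be counted). *)
Definition stabilizer_state {n : nat} (psi : ket n) : Prop :=
  braket psi psi = 1 /\
  #|[set sp : bool * {ffun 'I_n -> 'I_4} | pauli_op sp *m psi == psi]| = (2 ^ n)%N.

Definition stabilizer_rank_le {n : nat} (v : ket n) (k : nat) : Prop :=
  exists (r : nat) (a : 'I_r -> C) (s : 'I_r -> ket n),
    (r <= k)%N /\ (forall i, stabilizer_state (s i)) /\ v = \sum_(i < r) a i *: s i.

(* ---------- trace norm ----------
   ||A||_1 = Tr sqrt(A^dagger A) = sum of the square roots of the eigenvalues
   of the (normal, positive semidefinite) matrix A^dagger A, obtained from the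
   spectral decomposition of spectral.v. *)
Definition trace_norm (d : nat) (A : 'M[C]_d) : C :=
  \sum_(i < d) sqrtC (spectral_diag ((map_mx conjC A)^T *m A) 0 i).

(* A sample is a : {ffun 'I_k -> 'I_m} (the indices j drawn for
   omega_1..omega_k), drawn i.i.d. with P(j) = |c_j| / ||c||_1. *)
Definition l1norm {m : nat} (c : 'I_m -> C) : C := \sum_(j < m) `|c j|.

Definition sample_prob {m k : nat} (c : 'I_m -> C) (a : {ffun 'I_k -> 'I_m}) : C :=
  \prod_(al < k) (`|c (a al)| / l1norm c).

Definition omega {n m k : nat} (c : 'I_m -> C) (phi : 'I_m -> ket n)
  (a : {ffun 'I_k -> 'I_m}) (al : 'I_k) : ket n :=
  (c (a al) / `|c (a al)|) *: phi (a al).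

Definition Omega {n m k : nat} (c : 'I_m -> C) (phi : 'I_m -> ket n)
  (a : {ffun 'I_k -> 'I_m}) : ket n :=
  (l1norm c / k%:R) *: \sum_(al < k) omega c phi a al.

Definition Omega_norm2 {n m k : nat} (c : 'I_m -> C) (phi : 'I_m -> ket n)
  (a : {ffun 'I_k -> 'I_m}) : C :=
  braket (Omega c phi a) (Omega c phi a).

Definition sampled_state {n m k : nat} (c : 'I_m -> C) (phi : 'I_m -> ket n)
  (a : {ffun 'I_k -> 'I_m}) : ket n :=
  (sqrtC (Omega_norm2 c phi a))^-1 *: Omega c phi a.

(* rho_1 = E[ |Omega><Omega| / <Omega|Omega> ]
   (convention: the term is 0 if Omega = 0, since x / 0 = 0 in MathComp) *)
Definition rho1 {n m : nat} (k : nat) (c : 'I_m -> C) (phi : 'I_m -> ket n)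
  : 'M[C]_(qdim n) :=
  \sum_(a : {ffun 'I_k -> 'I_m})
     (sample_prob c a / Omega_norm2 c phi a) *: outer (Omega c phi a) (Omega c phi a).

Definition var_Omega_norm2 {n m : nat} (k : nat) (c : 'I_m -> C) (phi : 'I_m -> ket n) : C :=
  \sum_(a : {ffun 'I_k -> 'I_m}) sample_prob c a * (Omega_norm2 c phi a) ^+ 2
  - (\sum_(a : {ffun 'I_k -> 'I_m}) sample_prob c a * Omega_norm2 c phi a) ^+ 2.

End Quantum.

From HB Require Import structures.
From mathcomp Require Import all_boot all_order all_algebra.
From mathcomp Require Import ring.

(* Averaging over the i.i.d. samples gives
     E |Omega><Omega| = (1 - 1/k) |psi><psi| + (||c||_1 / k) sum_j |c_j| |phi_j><phi_j|,
   so rho_1 - |psi><psi| is E[(1/<Omega|Omega> - 1) |Omega><Omega|] plus a remainder of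
   trace norm at most (||c||_1^2 + 1) / k.  The first term has trace norm at most
   E|1 - <Omega|Omega>| <= sqrt (E (1 - <Omega|Omega>)^2) = sqrt (Var + b^2)
   <= sqrt Var + b, where b = E<Omega|Omega> - 1 = (||c||_1^2 - 1) / k >= 0.
   Trace norms are estimated through ||X||_1 = tr (M X), where M is the adjoint of the
   partial isometry in the polar decomposition of X, so |tr (M |u><u|)| <= <u|u>. *)

Set Implicit Arguments. Unset Strict Implicit. Unset Printing Implicit Defensive.
Import Order.TTheory GRing.Theory Num.Theory Num.Def.
Local Open Scope ring_scope.
Local Open Scope sesquilinear_scope.

Section Braket.
Variable C : numClosedFieldType.

Definition braketmx d (u v : 'cV[C]_d) : C := (u^t* *m v) 0 0.

Lemma braketE n (u v : ket C n) : braket u v = braketmx u v.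
Proof. by rewrite /braket map_trmx. Qed.

Lemma outerE n (u v : ket C n) : outer u v = u *m v^t*.
Proof. by rewrite /outer map_trmx. Qed.

Lemma trmxC_mul m n p (X : 'M[C]_(m, n)) (Y : 'M[C]_(n, p)) :
  (X *m Y)^t* = Y^t* *m X^t*.
Proof. by rewrite trmx_mul map_mxM. Qed.

Lemma braketmx_trmxC d1 d2 (X : 'M[C]_(d1, d2)) (u : 'cV[C]_d2) (v : 'cV[C]_d1) :
  braketmx u (X^t* *m v) = braketmx (X *m u) v.
Proof. by rewrite /braketmx trmxC_mul mulmxA. Qed.

Lemma braketmxE d (u v : 'cV[C]_d) : braketmx u v = \sum_i (u i 0)^* * v i 0.
Proof. by rewrite /braketmx mxE; apply: eq_bigr => i _; rewrite !mxE. Qed.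

Lemma braketmx_ge0 d (u : 'cV[C]_d) : 0 <= braketmx u u.
Proof. by rewrite braketmxE sumr_ge0 // => i _; rewrite mulrC mul_conjC_ge0. Qed.

Lemma braketmx_sumr d (I : finType) (u : 'cV[C]_d) (a : I -> C) (v : I -> 'cV_d) :
  braketmx u (\sum_i a i *: v i) = \sum_i a i * braketmx u (v i).
Proof.
by rewrite /braketmx mulmx_sumr summxE; apply: eq_bigr => i _; rewrite -scalemxAr mxE.
Qed.

Lemma mxtrace_outer d (u v : 'cV[C]_d) : \tr (u *m v^t*) = braketmx v u.
Proof. by rewrite mxtrace_mulC trace_mx11. Qed.

Lemma braketmx_CauchySchwarz d (u v : 'cV[C]_d) :
  `|braketmx u v| <= sqrtC (braketmx u u) * sqrtC (braketmx v v).
Proof.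
have dotE (x y : 'cV[C]_d) : braketmx x y = dotmx y^T x^T.
  by rewrite dotmxE braketmxE !mxE; apply: eq_bigr => i _; rewrite !mxE mulrC.
by rewrite !dotE mulrC; apply: (CauchySchwarz_sqrt (@dotmx C d)).
Qed.

End Braket.

Lemma divr_sqrtC (C : numClosedFieldType) (x : C) : x / sqrtC x = sqrtC x.
Proof.
have [->|nz] := eqVneq (sqrtC x) 0; first by rewrite invr0 mulr0.
by rewrite -{1}(sqrtCK x) expr2 mulfK.
Qed.

Section TraceNorm.
Variables (C : numClosedFieldType) (d : nat) (A : 'M[C]_d).

Local Notation B := (A^t* *m A).
Local Notation P := (spectralmx B).
Local Notation mu := (spectral_diag B).

Lemma adjM_spectral : B = P^t* *m diag_mx mu *m P.
Proof.
have B_normal : B \is normalmx by apply/normalmxP; rewrite trmxC_mul trmxCK.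
by have /orthomx_spectralP := B_normal; rewrite invmx_unitary ?spectral_unitarymx.
Qed.

Lemma spectral_diag_adjM_ge0 i : 0 <= mu 0 i.
Proof.
have := adjM_spectral; set Q := spectralmx _; set e := spectral_diag _ => BE.
have Q_unitary : Q \is unitarymx by apply: spectral_unitarymx.
have -> : e 0 i = (Q *m B *m Q^t*) i i.
  rewrite BE !mulmxA (unitarymxP Q_unitary) mul1mx mulmxtVK //.
  by rewrite mxE eqxx mulr1n.
rewrite (_ : Q *m B *m Q^t* = (A *m Q^t*)^t* *m (A *m Q^t*)); last first.
  by rewrite trmxC_mul trmxCK !mulmxA.
by set X := A *m _; rewrite mxE sumr_ge0 // => j _; rewrite !mxE mulrC mul_conjC_ge0.
Qed.

(* The pseudo-inverse of |A| = sqrt (A^t* A). *)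
Definition abs_pinv : 'M[C]_d := P^t* *m diag_mx (\row_i (sqrtC (mu 0 i))^-1) *m P.

Lemma abs_pinv_herm : abs_pinv^t* = abs_pinv.
Proof.
rewrite /abs_pinv !trmx_mul !map_mxM trmxCK tr_diag_mx map_diag_mx mulmxA.
congr (_ *m diag_mx _ *m _); apply/rowP => i.
rewrite !mxE; apply: geC0_conj.
by rewrite invr_ge0 sqrtC_ge0 spectral_diag_adjM_ge0.
Qed.

Lemma trace_normE : trace_norm A = \sum_i sqrtC (mu 0 i).
Proof. by rewrite /trace_norm -map_trmx. Qed.

Lemma trace_norm_ge0 : 0 <= trace_norm A.
Proof.
by rewrite trace_normE sumr_ge0 // => i _; rewrite sqrtC_ge0 spectral_diag_adjM_ge0.
Qed.

Lemma trace_norm_abs_pinv : trace_norm A = \tr (abs_pinv *m B).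
Proof.
rewrite trace_normE /abs_pinv.
have := adjM_spectral; set Q := spectralmx _; set e := spectral_diag _ => BE.
have Q_unitary : Q \is unitarymx by apply: spectral_unitarymx.
rewrite BE !mulmxA mulmxtVK // mxtrace_mulC !mulmxA (unitarymxP Q_unitary) mul1mx.
rewrite mulmx_diag mxtrace_diag; apply: eq_bigr => i _.
by rewrite !mxE mulrC divr_sqrtC.
Qed.

Lemma abs_pinv_contraction (u : 'cV[C]_d) :
  braketmx (A *m abs_pinv *m u) (A *m abs_pinv *m u) <= braketmx u u.
Proof.
have -> : braketmx (A *m abs_pinv *m u) (A *m abs_pinv *m u) =
          braketmx u (abs_pinv *m B *m abs_pinv *m u).
  rewrite /braketmx [(A *m _ *m u)^t*]trmxC_mul [(A *m _)^t*]trmxC_mul.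
  by rewrite abs_pinv_herm !mulmxA.
rewrite /abs_pinv; have := adjM_spectral.
set Q := spectralmx _; set e := spectral_diag _ => BE.
have Q_unitary : Q \is unitarymx by apply: spectral_unitarymx.
rewrite BE !mulmxA !mulmxtVK // -!mulmxA braketmx_trmxC.
set v := Q *m u.
have -> : braketmx u u = braketmx v v.
  by rewrite /v -braketmx_trmxC mulmxA (mulmx1C (unitarymxP Q_unitary)) mul1mx.
rewrite !braketmxE; apply: ler_sum => i _.
rewrite !mul_diag_mx !mxE; set w := \sum_j _; set s := (sqrtC _)^-1.
have -> : s * (e 0 i * (s * w)) = s * e 0 i * s * w by rewrite !mulrA.
rewrite mulrCA; apply: ler_piMl; first by rewrite mulrC mul_conjC_ge0.
rewrite /s -mulrA divr_sqrtC.
have [->|nz] := eqVneq (sqrtC (e 0 i)) 0; first by rewrite invr0 mul0r ler01.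
by rewrite mulVf.
Qed.

Lemma trace_norm_dual : exists M : 'M[C]_d,
  trace_norm A = \tr (M *m A) /\
  forall u : 'cV_d, `|\tr (M *m (u *m u^t*))| <= braketmx u u.
Proof.
exists (abs_pinv *m A^t*); split; first by rewrite trace_norm_abs_pinv mulmxA.
move=> u; set y := A *m abs_pinv *m u.
have -> : \tr (abs_pinv *m A^t* *m (u *m u^t*)) = braketmx y u.
  rewrite /y -braketmx_trmxC trmxC_mul abs_pinv_herm.
  rewrite mxtrace_mulC -[u *m _ *m _]mulmxA mxtrace_mulC trace_mx11.
  by rewrite /braketmx !mulmxA.
apply: le_trans (braketmx_CauchySchwarz y u) _.
rewrite -[leRHS]sqrtCK expr2 ler_wpM2r ?sqrtC_ge0 ?braketmx_ge0 //.
by rewrite ler_sqrtC ?nnegrE ?braketmx_ge0 //; apply: abs_pinv_contraction.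
Qed.

End TraceNorm.

Section FiniteMoments.
Variables (R : numDomainType) (I : finType) (p : I -> R).
Hypothesis p_ge0 : forall i, 0 <= p i.
Hypothesis p_sum1 : \sum_i p i = 1.

Lemma variance_centered (x : I -> R) :
  \sum_i p i * (x i - \sum_j p j * x j) ^+ 2 =
  \sum_i p i * x i ^+ 2 - (\sum_i p i * x i) ^+ 2.
Proof.
set mx := \sum_j p j * x j.
transitivity (\sum_i (p i * x i ^+ 2 - (2 * mx) * (p i * x i) + mx ^+ 2 * p i)).
  by apply: eq_bigr => i _; ring.
by rewrite big_split sumrB /= -!mulr_sumr p_sum1 -/mx; ring.
Qed.

Lemma sqr_mean_le (x : I -> R) : (forall i, x i \is Num.real) ->
  (\sum_i p i * x i) ^+ 2 <= \sum_i p i * x i ^+ 2.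
Proof.
move=> x_real; rewrite -subr_ge0 -variance_centered.
apply: sumr_ge0 => i _; rewrite mulr_ge0 // -realEsqr rpredB //.
by apply: rpred_sum => j _; rewrite rpredM // ger0_real.
Qed.

End FiniteMoments.

Section ProductWeights.
Variables (R : comPzRingType) (I J : finType) (q : J -> R).
Hypothesis q_sum1 : \sum_j q j = 1.

Lemma sum_prod_weights : \sum_(a : {ffun I -> J}) \prod_i q (a i) = 1.
Proof.
by rewrite -(bigA_distr_bigA (fun (_ : I) (j : J) => q j)) big1.
Qed.

Lemma sum_prod_weights_pair (i1 i2 : I) (f g : J -> R) :
  \sum_(a : {ffun I -> J}) (\prod_i q (a i)) * (f (a i1) * g (a i2)) =
  if i1 == i2 then \sum_j q j * (f j * g j)
  else (\sum_j q j * f j) * (\sum_j q j * g j).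
Proof.
pose h i j := q j * ((if i == i1 then f j else 1) * (if i == i2 then g j else 1)).
transitivity (\sum_(a : {ffun I -> J}) \prod_i h i (a i)).
  apply: eq_bigr => a _; rewrite /h !big_split /=.
  by rewrite -!big_mkcond !big_pred1_eq.
rewrite -bigA_distr_bigA /h.
have other i : i != i1 -> i != i2 -> \sum_j h i j = 1.
  move=> /negPf ne1 /negPf ne2; rewrite -[RHS]q_sum1.
  by apply: eq_bigr => j _; rewrite /h ne1 ne2 !mulr1.
case: eqVneq => [e12|ne12].
  rewrite (bigD1 i1) //= [X in _ * X]big1 ?mulr1 => [|i ne]; last by apply: other; rewrite -?e12.
  by rewrite -e12; apply: eq_bigr => j _; rewrite eqxx.
rewrite (bigD1 i1) //= (bigD1 i2) /=; last by rewrite eq_sym.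
rewrite [X in _ * (_ * X)]big1 ?mulr1 => [|i /andP[ne1 ne2]]; last exact: other.
rewrite !eqxx (negPf ne12) eq_sym (negPf ne12).
by congr (_ * _); apply: eq_bigr => j _; rewrite ?mulr1 ?mul1r.
Qed.

End ProductWeights.

Lemma sum_if_eq (R : comPzRingType) (I : finType) (D O : R) :
  \sum_(i : I) \sum_(j : I) (if i == j then D else O) =
  #|I|%:R * D + (#|I|%:R ^+ 2 - #|I|%:R) * O.
Proof.
have row i : \sum_(j : I) (if i == j then D else O) = (D - O) + #|I|%:R * O.
  transitivity (\sum_(j : I) ((i == j)%:R * (D - O) + O)).
    by apply: eq_bigr => j _; case: (i == j); rewrite ?mul1r ?mul0r ?add0r ?subrK.
  rewrite big_split /= -mulr_suml sumr_const (bigD1 i) //= eqxx big1.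
    by rewrite addr0 mul1r -[O *+ _]mulr_natl.
  by move=> j; rewrite eq_sym => /negPf->.
rewrite (eq_bigr _ (fun i _ => row i)) sumr_const -[(_ + _) *+ _]mulr_natl.
rewrite (_ : #|xpredT| = #|I|) //; ring.
Qed.

Section Phase.
Variable C : numClosedFieldType.

Lemma normr_mul_phase (a : C) : `|a| * (a / `|a|) = a.
Proof.
have [->|nz] := eqVneq a 0; first by rewrite normr0 mul0r.
by rewrite mulrC divfK // normr_eq0.
Qed.

Lemma phase_mul_conj (a : C) : a != 0 -> a / `|a| * (a / `|a|)^* = 1.
Proof.
move=> nz; have na : `|a| != 0 by rewrite normr_eq0.
rewrite rmorphM fmorphV /= (geC0_conj (normr_ge0 a)) mulrACA -normCK expr2.
by rewrite mulrACA mulfV // mulr1.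
Qed.

End Phase.

Lemma outer_entry (C : numClosedFieldType) n (u v : ket C n) x y :
  outer u v x y = u x 0 * (v y 0)^*.
Proof. by rewrite /outer mxE big_ord1 !mxE. Qed.

Lemma mxtrace_outer_braket (C : numClosedFieldType) n (u : ket C n) :
  \tr (outer u u) = braket u u.
Proof. by rewrite outerE mxtrace_outer braketE. Qed.

Lemma l1norm_ge1 (C : numClosedFieldType) n m (c : 'I_m -> C) (phi : 'I_m -> ket C n) :
  (forall j, braket (phi j) (phi j) = 1) ->
  braket (\sum_(j < m) c j *: phi j) (\sum_(j < m) c j *: phi j) = 1 ->
  1 <= l1norm c.
Proof.
move=> phi_unit; rewrite braketE => psi_unit; rewrite -normr1 -{1}psi_unit braketmx_sumr.
apply: le_trans (ler_norm_sum _ _ _) _; apply: ler_sum => j _.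
rewrite normrM ler_piMr //; apply: le_trans (braketmx_CauchySchwarz _ _) _.
by rewrite psi_unit -braketE phi_unit sqrtC1 mulr1.
Qed.

Section Sparsification.
Variables (C : numClosedFieldType) (n m k : nat).
Variables (c : 'I_m -> C) (phi : 'I_m -> ket C n).

Local Notation L := (l1norm c).
Local Notation psi := (\sum_(j < m) c j *: phi j).
Local Notation p := (sample_prob c).
Local Notation O a := (outer (Omega c phi a) (Omega c phi a)).
Local Notation SP := (\sum_(j < m) `|c j| *: outer (phi j) (phi j)).

Lemma sampled_state_rank (a : {ffun 'I_k -> 'I_m}) : (forall j, stabilizer_state (phi j)) ->
  stabilizer_rank_le (sampled_state c phi a) k.
Proof.
move=> phi_stab; exists k, (fun i => (sqrtC (Omega_norm2 c phi a))^-1 * (L / k%:R) *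
  (c (a i) / `|c (a i)|)), (fun i => phi (a i)).
split=> //; split=> [i|]; first exact: phi_stab.
rewrite /sampled_state /Omega /omega scalerA scaler_sumr.
by apply: eq_bigr => i _; rewrite !scalerA.
Qed.

Lemma l1norm_ge0 : 0 <= L.
Proof. exact: sumr_ge0. Qed.

Lemma sample_prob_ge0 (a : {ffun 'I_k -> 'I_m}) : 0 <= p a.
Proof. by apply: prodr_ge0 => i _; rewrite divr_ge0 ?l1norm_ge0. Qed.

Lemma outer_Omega_entry (a : {ffun 'I_k -> 'I_m}) x y :
  O a x y = (L / k%:R) ^+ 2 * \sum_(al < k) \sum_(be < k)
    (c (a al) / `|c (a al)| * phi (a al) x 0) * (c (a be) / `|c (a be)| * phi (a be) y 0)^*.
Proof.
have Omega_entry z : Omega c phi a z 0 =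
    L / k%:R * \sum_(al < k) c (a al) / `|c (a al)| * phi (a al) z 0.
  by rewrite /Omega mxE summxE; congr (_ * _); apply: eq_bigr => al _; rewrite mxE.
rewrite outer_entry !Omega_entry rmorphM rmorph_sum /= geC0_conj ?divr_ge0 ?l1norm_ge0 //.
rewrite mulrACA -expr2; congr (_ * _); rewrite mulr_suml.
by apply: eq_bigr => al _; rewrite mulr_sumr.
Qed.

Hypothesis k_gt0 : (0 < k)%N.
Hypothesis L_neq0 : L != 0.

Let k_neq0 : (k%:R : C) != 0.
Proof. by rewrite pnatr_eq0 -lt0n. Qed.

Let q j := `|c j| / L.

Let q_sum1 : \sum_j q j = 1.
Proof. by rewrite -mulr_suml divff. Qed.

Lemma sum_sample_prob : \sum_(a : {ffun 'I_k -> 'I_m}) p a = 1.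
Proof. exact: sum_prod_weights q_sum1. Qed.

Let mean_phase (z : 'I_m -> C) :
  \sum_j q j * (c j / `|c j| * z j) = L^-1 * \sum_j c j * z j.
Proof.
rewrite mulr_sumr; apply: eq_bigr => j _.
have -> : q j * (c j / `|c j| * z j) = L^-1 * (`|c j| * (c j / `|c j|) * z j).
  by rewrite /q; ring.
by rewrite normr_mul_phase.
Qed.

Lemma mean_outer_Omega :
  \sum_(a : {ffun 'I_k -> 'I_m}) p a *: O a =
  (1 - k%:R^-1) *: outer psi psi + (L / k%:R) *: SP.
Proof.
apply/matrixP => x y.
pose W j := c j / `|c j| * phi j x 0.
pose V j := (c j / `|c j| * phi j y 0)^*.
have O_entry a : O a x y = (L / k%:R) ^+ 2 * \sum_(al < k) \sum_(be < k) W (a al) * V (a be).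
  exact: outer_Omega_entry.
have psi_entry z : psi z 0 = \sum_j c j * phi j z 0.
  by rewrite summxE; apply: eq_bigr => j _; rewrite mxE.
have mean_W : \sum_j q j * W j = L^-1 * psi x 0 by rewrite mean_phase psi_entry.
have mean_V : \sum_j q j * V j = L^-1 * (psi y 0)^*.
  rewrite psi_entry -(geC0_conj (x := L^-1)) ?invr_ge0 ?l1norm_ge0 // -rmorphM -mean_phase.
  rewrite rmorph_sum; apply: eq_bigr => j _.
  rewrite rmorphM; congr (_ * _); apply/esym/geC0_conj.
  by rewrite divr_ge0 ?l1norm_ge0.
have mean_WV : \sum_j q j * (W j * V j) =
    L^-1 * \sum_j `|c j| * (phi j x 0 * (phi j y 0)^*).
  rewrite mulr_sumr; apply: eq_bigr => j _; rewrite /q /W /V.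
  have [->|cj_neq0] := eqVneq (c j) 0; first by rewrite normr0 !mul0r mulr0.
  rewrite rmorphM /=.
  transitivity (L^-1 * (`|c j| * (phi j x 0 * (phi j y 0)^*)) *
                (c j / `|c j| * (c j / `|c j|)^*)); first by ring.
  by rewrite phase_mul_conj // mulr1.
transitivity ((L / k%:R) ^+ 2 * \sum_(al < k) \sum_(be < k)
    \sum_(a : {ffun 'I_k -> 'I_m}) (\prod_i q (a i)) * (W (a al) * V (a be))).
  rewrite summxE (eq_bigr (fun a => p a * O a x y)) => [|a _]; last by rewrite mxE.
  under eq_bigr do rewrite O_entry mulrCA.
  rewrite -mulr_sumr; congr (_ * _).
  under eq_bigr do rewrite mulr_sumr; rewrite exchange_big.
  by apply: eq_bigr => al _; under eq_bigr do rewrite mulr_sumr; rewrite exchange_big.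
under eq_bigr do under eq_bigr do rewrite sum_prod_weights_pair //.
rewrite sum_if_eq card_ord mean_W mean_V mean_WV [RHS]mxE [in RHS]mxE outer_entry.
rewrite [X in _ = _ + X]mxE [X in _ = _ + _ * X]summxE.
under [X in _ = _ + _ * X]eq_bigr do rewrite mxE outer_entry.
by field; rewrite k_neq0.
Qed.

Hypothesis phi_unit : forall j, braket (phi j) (phi j) = 1.
Hypothesis psi_unit : braket psi psi = 1.

Local Notation N := (Omega_norm2 c phi).

Lemma mean_Omega_norm2 :
  \sum_(a : {ffun 'I_k -> 'I_m}) p a * N a = 1 - k%:R^-1 + L ^+ 2 / k%:R.
Proof.
transitivity (\tr (\sum_(a : {ffun 'I_k -> 'I_m}) p a *: O a)).
  by rewrite [RHS]raddf_sum /=; apply: eq_bigr => a _; rewrite mxtraceZ mxtrace_outer_braket.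
rewrite mean_outer_Omega mxtraceD !mxtraceZ mxtrace_outer_braket psi_unit.
rewrite [\tr (\sum_j _)]raddf_sum /=.
under eq_bigr do rewrite mxtraceZ mxtrace_outer_braket phi_unit mulr1.
by rewrite -/(l1norm c); field.
Qed.

Lemma rho1_sub_outer :
  rho1 k c phi - outer psi psi =
  \sum_(a : {ffun 'I_k -> 'I_m}) (p a / N a - p a) *: O a +
  ((L / k%:R) *: SP - k%:R^-1 *: outer psi psi).
Proof.
under [X in _ = X + _]eq_bigr do rewrite scalerBl.
rewrite [X in _ = X + _]sumrB mean_outer_Omega scalerBl scale1r.
by rewrite /rho1; apply/matrixP => x y; rewrite !mxE; ring.
Qed.

Lemma mean_abs_dev_Omega_norm2 :
  \sum_(a : {ffun 'I_k -> 'I_m}) p a * `|1 - N a| <=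
  sqrtC (var_Omega_norm2 k c phi) + (L ^+ 2 - 1) / k%:R.
Proof.
set var := var_Omega_norm2 k c phi; set b := (L ^+ 2 - 1) / k%:R.
have N_real (a : {ffun 'I_k -> 'I_m}) : N a \is Num.real.
  by rewrite ger0_real // /Omega_norm2 braketE braketmx_ge0.
have var_ge0 : 0 <= var.
  rewrite /var /var_Omega_norm2 subr_ge0.
  exact: (sqr_mean_le sample_prob_ge0 sum_sample_prob N_real).
have b_ge0 : 0 <= b.
  by rewrite divr_ge0 ?ler0n // subr_ge0 exprn_ege1 // (l1norm_ge1 phi_unit psi_unit).
have second_moment : \sum_(a : {ffun 'I_k -> 'I_m}) p a * `|1 - N a| ^+ 2 = var + b ^+ 2.
  transitivity (\sum_(a : {ffun 'I_k -> 'I_m}) (p a * N a ^+ 2 - 2 * (p a * N a) + p a)).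
    by apply: eq_bigr => a _; rewrite real_normK ?rpredB ?rpred1 //; ring.
  rewrite big_split sumrB /= -mulr_sumr sum_sample_prob.
  by rewrite /var /var_Omega_norm2 mean_Omega_norm2 /b; field.
have dev_ge0 : 0 <= \sum_(a : {ffun 'I_k -> 'I_m}) p a * `|1 - N a|.
  by apply: sumr_ge0 => a _; rewrite mulr_ge0 ?sample_prob_ge0.
rewrite -(ler_pXn2r (n := 2)) // ?nnegrE ?addr_ge0 ?sqrtC_ge0 //.
apply: le_trans (_ : _ <= var + b ^+ 2) _.
  rewrite -second_moment.
  exact: (sqr_mean_le sample_prob_ge0 sum_sample_prob (fun a => normr_real _)).
by rewrite sqrrD sqrtCK lerD2r lerDl mulrn_wge0 // mulr_ge0 ?sqrtC_ge0.
Qed.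

Lemma trace_rho1_sub_outer_le (M : 'M[C]_(qdim n)) :
  (forall u : ket C n, `|\tr (M *m (u *m u^t*))| <= braketmx u u) ->
  `|\tr (M *m (rho1 k c phi - outer psi psi))| <=
  \sum_(a : {ffun 'I_k -> 'I_m}) p a * `|1 - N a| + (L ^+ 2 + 1) / k%:R.
Proof.
move=> M_contr; have trZ_outer (w : C) (u : ket C n) :
    `|\tr (M *m (w *: outer u u))| <= `|w| * braket u u.
  by rewrite -scalemxAr mxtraceZ normrM outerE braketE ler_wpM2l.
rewrite rho1_sub_outer mulmxDr mxtraceD.
apply: le_trans (ler_normD _ _) _; apply: lerD.
  rewrite mulmx_sumr raddf_sum /=; apply: le_trans (ler_norm_sum _ _ _) _.
  apply: ler_sum => a _; apply: le_trans (trZ_outer _ _) _; rewrite -[braket _ _]/(N a).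
  have N_ge0 : 0 <= N a by rewrite /Omega_norm2 braketE braketmx_ge0.
  have p_ge0 := sample_prob_ge0 a.
  have [->|N_neq0] := eqVneq (N a) 0; first by rewrite mulr0 mulr_ge0.
  rewrite -{2}(ger0_norm N_ge0) -normrM mulrBl divfK // -{1}[p a]mulr1 -mulrBr.
  by rewrite normrM ger0_norm.
rewrite mulmxBr raddfB /=; apply: le_trans (ler_normB _ _) _.
have -> : (L ^+ 2 + 1) / k%:R = L / k%:R * \sum_j `|c j| + `|k%:R^-1| * 1.
  by rewrite ger0_norm ?invr_ge0 ?ler0n // -/(l1norm c); field.
apply: lerD; last by rewrite -psi_unit trZ_outer.
rewrite -scalemxAr mxtraceZ normrM ger0_norm ?divr_ge0 ?ler0n ?l1norm_ge0 //.
rewrite ler_wpM2l ?divr_ge0 ?ler0n ?l1norm_ge0 //.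
rewrite mulmx_sumr raddf_sum /=; apply: le_trans (ler_norm_sum _ _ _) _.
apply: ler_sum => j _; apply: le_trans (trZ_outer _ _) _.
by rewrite phi_unit normr_id mulr1.
Qed.

End Sparsification.

Unset Implicit Arguments.

Theorem lemma6 (C : numClosedFieldType) (n m k : nat)
  (c : 'I_m -> C) (phi : 'I_m -> ket C n) :
  (0 < k)%N ->
  (forall j, stabilizer_state (phi j)) ->
  braket (\sum_(j < m) c j *: phi j) (\sum_(j < m) c j *: phi j) = 1 ->
  (forall a : {ffun 'I_k -> 'I_m}, 0 < sample_prob c a ->
     stabilizer_rank_le (sampled_state c phi a) k) /\
  trace_norm (rho1 k c phi - outer (\sum_(j < m) c j *: phi j) (\sum_(j < m) c j *: phi j))
    <= 2 * l1norm c ^+ 2 / k%:R + sqrtC (var_Omega_norm2 k c phi).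
Proof.
move=> k_gt0 phi_stab psi_unit; split=> [a _|]; first exact: sampled_state_rank.
have phi_unit j : braket (phi j) (phi j) = 1 := (phi_stab j).1.
have L_neq0 : l1norm c != 0.
  by rewrite gt_eqF // (lt_le_trans ltr01 (l1norm_ge1 phi_unit psi_unit)).
set X := rho1 k c phi - _.
have [M [tnE M_contr]] := trace_norm_dual X.
rewrite -(ger0_norm (trace_norm_ge0 X)) tnE.
apply: le_trans (trace_rho1_sub_outer_le k_gt0 L_neq0 phi_unit psi_unit M_contr) _.
apply: le_trans (lerD (mean_abs_dev_Omega_norm2 k_gt0 L_neq0 phi_unit psi_unit) (lexx _)) _.
have kn0 : (k%:R : C) != 0 by rewrite pnatr_eq0 -lt0n.
by rewrite le_eqVlt; apply/orP; left; apply/eqP; field.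
Qed.
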